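(* Consider the one-ported gather/scatter tree model described in the context, with arbitrary block sizes $m_0,\dots,m_{p-1}\ge 0$ and arbitrary (possibly non-homogeneous) parameters $\alpha_{ij},\beta_{ij},\gamma_i\ge 0$. Let $P\subseteq\{0,\dots,p-1\}$ with $|P|\ge 2$ and let $r\in P$. Then the minimum of $\mathrm{cost}(T)$ over all communication trees $T$ on $P$ with root $r$ is equal to the minimum, over all partitions $P=R\cup\bar R$ into disjoint sets with $r\in R$, all $r'\in\bar R$, all communication trees $T_1$ on $R$ with root $r$ and all communication trees $T_2$ on $\bar R$ with root $r'$, of the quantity \[ \Phi=\begin{cases}\max(\gamma_r m_r,\ \mathrm{cost}(T_2))+\alpha_{r'r}+\beta_{r'r}\,\mathrm{Size}(\bar R) & \text{if } R=\{r\},\\[2pt] \max(\mathrm{cost}(T_1),\ \mathrm{cost}(T_2))+\alpha_{r'r}+\beta_{r'r}\,\mathrm{Size}(\bar R) & \text{if } |R|\ge 2.\end{cases} \]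
   Context: There are $p$ processors $0,\dots,p-1$; processor $i$ has a data block of size $m_i\ge 0$. For a set $R$ of processors, $\mathrm{Size}(R)=\sum_{i\in R}m_i$. For every ordered pair of distinct processors $i,j$ there are a start-up latency $\alpha_{ij}\ge 0$ and a time per unit $\beta_{ij}\ge 0$ (transmitting $s$ units from $i$ to $j$ costs $\alpha_{ij}+\beta_{ij}s$), and each processor $i$ has a local copy cost $\gamma_i\ge0$ per unit. Communication trees (used for gather and scatter): a communication tree on a nonempty finite set $R$ of processors with root $r\in R$ is either the trivial tree (only when $R=\{r\}$), or consists of the root $r$ together with a finite sequence of entries $(E_0,\dots,E_j)$ in which exactly one entry is a special ''local copy'' marker and every other entry $E_t$ is a communication tree on a set $R_t$ with root $r_t$, there is at least one such tree entry, and the sets $\{r\}$ and the $R_t$ form a partition of $R$ (the roots $r_t$ are the children of $r$). The completion time (one-ported model) is defined recursively: the trivial tree has cost $0$; otherwise put $c_{-1}=0$ and for $t=0,\dots,j$ let $c_t=c_{t-1}+\gamma_r m_r$ if $E_t$ is the local copy marker, and $c_t=\max(c_{t-1},\mathrm{cost}(E_t))+\alpha_{r_t r}+\beta_{r_t r}\,\mathrm{Size}(R_t)$ if $E_t$ is a tree on $R_t$ with root $r_t$; then $\mathrm{cost}(T)=c_j$. *)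

From HB Require Import structures.
From mathcomp Require Import all_boot all_order all_algebra.
Set Implicit Arguments. Unset Strict Implicit. Unset Printing Implicit Defensive.
Import Order.TTheory GRing.Theory Num.Theory.
Local Open Scope ring_scope.

(* Communication trees over processors 'I_p.  An entry of a node is either
   the local-copy marker (None) or a subtree (Some t). *)
Inductive ctree (p : nat) : Type :=
| Leaf of 'I_p
| Node of 'I_p & seq (option (ctree p)).

Section Trees.
Variable p : nat.

Definition root (t : ctree p) : 'I_p :=
  match t with Leaf r => r | Node r _ => r end.

Fixpoint supp (t : ctree p) : {set 'I_p} :=
  match t with
  | Leaf r => [set r]
  | Node r es =>
      r |: foldr (fun A B => A :|: B) set0
             (map (fun e => if e is Some c then supp c else set0) es)
  end.

Definition kid_supps (es : seq (option (ctree p))) : seq {set 'I_p} :=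
  pmap id (map (fun e => if e is Some c then Some (supp c) else None) es).

Definition is_copy (e : option (ctree p)) : bool :=
  if e is None then true else false.

Fixpoint wf (t : ctree p) : bool :=
  match t with
  | Leaf _ => true
  | Node r es =>
      [&& count is_copy es == 1%N,
          has (fun e => ~~ is_copy e) es,
          all id (map (fun e => if e is Some c then wf c else true) es),
          all (fun A : {set 'I_p} => r \notin A) (kid_supps es)
        & pairwise (fun A B : {set 'I_p} => [disjoint A & B]) (kid_supps es)]
  end.

Definition is_ctree (R : {set 'I_p}) (r : 'I_p) (t : ctree p) : bool :=
  [&& wf t, supp t == R & root t == r].

Variable K : realFieldType.
Variables (m gamma : 'I_p -> K) (alpha beta : 'I_p -> 'I_p -> K).

Definition Size (R : {set 'I_p}) : K := \sum_(i in R) m i.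

Fixpoint cost (t : ctree p) : K :=
  match t with
  | Leaf _ => 0
  | Node r es =>
      foldl (fun c (e : option ('I_p * {set 'I_p} * K)) =>
               match e with
               | None => c + gamma r * m r
               | Some (rt, Rt, ct) =>
                   Num.max c ct + alpha rt r + beta rt r * Size Rt
               end) 0
        (map (fun e => if e is Some t' then Some (root t', supp t', cost t')
                       else None) es)
  end.

End Trees.

Definition is_min (K : realFieldType) (S : K -> Prop) (x : K) : Prop :=
  S x /\ forall y, S y -> x <= y.

(* Take the last entry of the root of a tree on P.  If it is the local copy,
   move the copy to the front: adding gamma_r m_r >= 0 before a max costs at
   most gamma_r m_r after it, so the completion time does not increase.  The
   last entry is then a subtree T2 on some Rb, and removing it leaves a tree T1
   on R = P minus Rb (the trivial tree when only the copy remains); the cost of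
   the whole tree is exactly Phi(T1, T2).  Conversely grafting T2 as last entry
   of T1 turns any split into a tree of cost Phi.  So both sets of costs have
   the same minimum, which exists by induction on |P|: there are finitely many
   splits, and Phi is monotone in cost T1 and cost T2. *)

From Pilot Require Import Defs.
From mathcomp Require Import all_boot all_order all_algebra.
Import Order.TTheory GRing.Theory Num.Theory.
(* Let [root] denote the root of a communication tree, not [poly.root]. *)
Import Defs.
Local Open Scope ring_scope.

Set Implicit Arguments. Unset Strict Implicit. Unset Printing Implicit Defensive.

Lemma disjoint_setU (T : finType) (A B C : {set T}) :
  [disjoint A :|: B & C] = [disjoint A & C] && [disjoint B & C].
Proof. by rewrite -disjointU; apply: eq_disjoint => x; rewrite !inE. Qed.

Lemma disjoint_setU1 (T : finType) (x : T) (A B : {set T}) :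
  [disjoint x |: A & B] = (x \notin B) && [disjoint A & B].
Proof. by rewrite -disjointU1; apply: eq_disjoint => y; rewrite !inE. Qed.

Lemma disjoint_setD (T : finType) (A B : {set T}) : [disjoint A & B :\: A].
Proof. by rewrite -setI_eq0 setDE setICA setICr setI0. Qed.

Lemma setUD_subset (T : finType) (A B : {set T}) : A \subset B -> A :|: B :\: A = B.
Proof. by rewrite setDE setUIr setUCr setIT => /setUidPr. Qed.

Lemma subset_card_lt (T : finType) (A B : {set T}) x :
  A \subset B -> x \in B -> x \notin A -> (#|A| < #|B|)%N.
Proof. by move=> AB xB xA; apply/proper_card/properP; split=> //; exists x. Qed.

Section Minima.
Variable K : realFieldType.
Implicit Types (S T : K -> Prop) (x y : K).

Lemma is_min_dominated S T x :
  (forall y, S y -> T y) -> (forall y, T y -> exists2 z, S z & z <= y) ->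
  is_min T x <-> is_min S x.
Proof.
move=> ST TS; split=> [[Tx x_min] | [Sx x_min]]; last first.
  by split=> [|y /TS [z /x_min]]; [exact: ST | apply: le_trans].
have [z Sz le_zx] := TS x Tx.
have eq_zx : z = x by apply/le_anti; rewrite le_zx (x_min z (ST z Sz)).
by split=> [|y /ST]; [rewrite -eq_zx | apply: x_min].
Qed.

Lemma is_min_eq S T x : (forall y, S y <-> T y) -> is_min S x -> is_min T x.
Proof.
move=> ST; apply: (iffRL (is_min_dominated x _ _)) => [y /ST // | y /ST Sy]; by exists y.
Qed.

Lemma is_min_or S T x y :
  is_min S x -> is_min T y -> is_min (fun z => S z \/ T z) (Num.min x y).
Proof.
move=> [Sx x_min] [Ty y_min]; split.
  by case: leP => _; [left | right].
by move=> z [/x_min | /y_min]; rewrite ge_min => ->; rewrite ?orbT.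
Qed.

Definition image2 (f : K -> K -> K) S T : K -> Prop :=
  fun z => exists x y, [/\ S x, T y & z = f x y].

Lemma is_min_image2 (f : K -> K -> K) S T x y :
  (forall x x' y y', x <= x' -> y <= y' -> f x y <= f x' y') ->
  is_min S x -> is_min T y -> is_min (image2 f S T) (f x y).
Proof.
move=> f_mono [Sx x_min] [Ty y_min]; split; first by exists x, y.
by move=> _ [x' [y' [/x_min le_x /y_min le_y ->]]]; apply: f_mono.
Qed.

Lemma exists_min_union (I : eqType) (s : seq I) (S : I -> K -> Prop) :
  s != [::] -> (forall i, i \in s -> exists x, is_min (S i) x) ->
  exists x, is_min (fun y => exists2 i, i \in s & S i y) x.
Proof.
case: s => [//|i s] _; elim: s i => [|j s IH] i S_min.
  have [x x_min] := S_min i (mem_head _ _); exists x; apply: is_min_eq x_min => y.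
  by split=> [|[k]]; [exists i; rewrite ?mem_head | rewrite inE => /eqP ->].
have [x x_min] := S_min i (mem_head _ _).
have [y y_min] := IH j (fun k ks => S_min k (mem_behead (s := [:: i, j & s]) ks)).
exists (Num.min x y); apply: is_min_eq (is_min_or x_min y_min) => z.
split=> [[Siz | [k ks Skz]] | [k]]; first by exists i; rewrite ?mem_head.
  by exists k; rewrite // in_cons ks orbT.
by rewrite in_cons => /orP [/eqP -> | ks Skz]; [left | right; exists k].
Qed.

End Minima.

Section CommunicationTrees.
Variable p : nat.
Implicit Types (t : ctree p) (es : seq (option (ctree p))) (r : 'I_p) (B : {set 'I_p}).

Definition kids_supp es : {set 'I_p} := \bigcup_(A <- kid_supps es) A.

Lemma supp_Node r es : supp (Node r es) = r |: kids_supp es.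
Proof.
congr (_ |: _); rewrite /kids_supp.
by elim: es => [|[c|] es IH]; rewrite /= ?big_nil ?big_cons ?set0U // IH.
Qed.

Lemma kid_supps_rcons es t : kid_supps (rcons es (Some t)) = rcons (kid_supps es) (supp t).
Proof. by rewrite /kid_supps map_rcons -!cats1 pmap_cat. Qed.

Lemma kid_supps_rcons_copy es : kid_supps (rcons es None) = kid_supps es.
Proof. by rewrite /kid_supps map_rcons -!cats1 pmap_cat cats0. Qed.

Lemma kids_supp_rcons es t : kids_supp (rcons es (Some t)) = kids_supp es :|: supp t.
Proof. by rewrite /kids_supp kid_supps_rcons big_rcons. Qed.

Lemma disjoint_kids_supp es B :
  [disjoint kids_supp es & B] = all (fun A : {set 'I_p} => [disjoint A & B]) (kid_supps es).
Proof.
rewrite /kids_supp; elim: (kid_supps es) => [|A s IH].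
  by rewrite big_nil; apply: eq_disjoint0 => x; rewrite inE.
by rewrite big_cons /= -IH disjoint_setU.
Qed.

Lemma root_supp t : root t \in supp t.
Proof. by case: t => [r|r es]; rewrite /= ?set11 ?setU11. Qed.

Lemma wf_Node_supp_neq1 r es : wf (Node r es) -> supp (Node r es) != [set r].
Proof.
case/and5P=> _ has_kid _ r_notin_kids _.
have [A A_kid A_nz] : exists2 A, A \in kid_supps es & A != set0.
  elim: es has_kid {r_notin_kids} => [|[c|] es IH] /= has_kid; [done | | exact: IH].
  by exists (supp c); rewrite ?mem_head //; apply/set0Pn; exists (root c); exact: root_supp.
have [x xA] := set0Pn _ A_nz.
apply/eqP => /setP /(_ x); rewrite supp_Node in_set1 in_setU1.
have x_kids : x \in kids_supp es.
  by apply: subsetP xA; rewrite /kids_supp bigcup_seq bigcup_sup.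
have /negPf -> : x != r by apply: contraNneq (allP r_notin_kids A A_kid) => <-.
by rewrite x_kids.
Qed.

Lemma ctree_set1 r t : is_ctree [set r] r t -> t = Leaf r.
Proof.
case: t => [r0|r0 es] /and3P [wf_t /eqP supp_t /eqP /= r0r]; subst r0 => //.
by move: (wf_Node_supp_neq1 wf_t); rewrite supp_t eqxx.
Qed.

Definition entries_wf r es :=
  [&& count (@is_copy p) es == 1%N,
      all id (map (fun e => if e is Some c then wf c else true) es),
      all (fun A : {set 'I_p} => r \notin A) (kid_supps es)
    & pairwise (fun A B : {set 'I_p} => [disjoint A & B]) (kid_supps es)].

Lemma wf_NodeE r es : wf (Node r es) = has (fun e => ~~ is_copy e) es && entries_wf r es.
Proof. by rewrite /= /entries_wf; bool_congr. Qed.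

Lemma wf_Node_rcons r es t :
  wf (Node r (rcons es (Some t))) =
  [&& entries_wf r es, wf t & [disjoint r |: kids_supp es & supp t]].
Proof.
rewrite wf_NodeE has_rcons /= /entries_wf -cats1 count_cat addn0 map_cat all_cat /= andbT.
rewrite cats1 kid_supps_rcons all_rcons pairwise_rcons.
rewrite disjoint_setU1 disjoint_kids_supp -!andbA.
by case: (wf t); case: (r \in supp t); case: (pairwise _ _); rewrite /= ?andbF ?andbT.
Qed.

Lemma wf_Node_copy_first r es : wf (Node r (None :: es)) = wf (Node r (rcons es None)).
Proof.
rewrite !wf_NodeE /entries_wf /= kid_supps_rcons_copy.
by rewrite -cats1 has_cat count_cat map_cat all_cat /= orbF addn1 andbT.
Qed.

(* A trivial tree acts as a node whose only entry is the local copy; such a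
   node is not itself well formed, but grafting a subtree onto it is. *)
Definition entries t := if t is Node _ es then es else [:: None].

Definition graft t1 t2 := Node (root t1) (rcons (entries t1) (Some t2)).

Definition node r es := if es is [:: None] then Leaf r else Node r es.

Lemma root_node r es : root (node r es) = r.
Proof. by case: es => [|[c|] [|e es]]. Qed.

Lemma graft_node r es t : graft (node r es) t = Node r (rcons es (Some t)).
Proof. by case: es => [|[c|] [|e es]]. Qed.

Lemma kids_supp_copy : kids_supp [:: None] = set0.
Proof. exact: big_nil. Qed.

Lemma supp_node r es : supp (node r es) = r |: kids_supp es.
Proof.
case: es => [|[c|] [|e es]]; try exact: supp_Node.
by rewrite kids_supp_copy setU0.
Qed.

Lemma supp_graft t1 t2 : supp (graft t1 t2) = supp t1 :|: supp t2.
Proof.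
rewrite /graft supp_Node kids_supp_rcons setUA.
by case: t1 => [r|r es]; rewrite /= ?kids_supp_copy ?setU0 -?supp_Node.
Qed.

Lemma wf_graft t1 t2 :
  wf t1 -> wf t2 -> [disjoint supp t1 & supp t2] -> wf (graft t1 t2).
Proof.
case: t1 => [r|r es] wf1 wf2 disj; first by rewrite /= wf2 -disjoints1 disj.
rewrite (_ : graft _ _ = Node r (rcons es (Some t2))) // wf_Node_rcons wf2 -supp_Node disj andbT.
by move: wf1; rewrite wf_NodeE andbT => /andP [].
Qed.

Lemma wf_node r es : wf (node r es) = entries_wf r es.
Proof.
case: es => [|[c|] [|e es]] //; rewrite [node _ _]/= wf_NodeE; apply/andb_idl => //.
by case: e => // /and4P [].
Qed.

Lemma wf_ungraft r es t :
  wf (Node r (rcons es (Some t))) ->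
  [/\ wf (node r es), wf t & [disjoint supp (node r es) & supp t]].
Proof.
by rewrite wf_Node_rcons wf_node supp_node => /and3P [].
Qed.

Lemma is_ctree_graft R Rb r r' t1 t2 :
  is_ctree R r t1 -> is_ctree Rb r' t2 -> [disjoint R & Rb] ->
  is_ctree (R :|: Rb) r (graft t1 t2).
Proof.
case/and3P=> wf1 /eqP <- /eqP r1 /and3P [wf2 /eqP <- _] disj.
by rewrite /is_ctree wf_graft // supp_graft eqxx -r1 /= eqxx.
Qed.

Lemma is_ctree_ungraft r es t :
  wf (Node r (rcons es (Some t))) ->
  [/\ is_ctree (supp (node r es)) r (node r es), is_ctree (supp t) (root t) t
    & [disjoint supp (node r es) & supp t]].
Proof.
case/wf_ungraft=> wf1 wf2 disj; rewrite /is_ctree wf1 wf2 disj !eqxx; split=> //.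
by rewrite root_node eqxx.
Qed.

Lemma is_ctree_copy_first R r es :
  is_ctree R r (Node r (None :: es)) = is_ctree R r (Node r (rcons es None)).
Proof.
by rewrite /is_ctree wf_Node_copy_first !supp_Node /kids_supp kid_supps_rcons_copy.
Qed.

End CommunicationTrees.

Section Cost.
Variables (K : realFieldType) (p : nat).
Variables (m gamma : 'I_p -> K) (alpha beta : 'I_p -> 'I_p -> K).
Implicit Types (t : ctree p) (es : seq (option (ctree p))) (r : 'I_p) (R : {set 'I_p}).
Local Notation cost := (cost m gamma alpha beta).

Definition cost_step r (c : K) (e : option ('I_p * {set 'I_p} * K)) : K :=
  match e with
  | None => c + gamma r * m r
  | Some (rt, Rt, ct) => Num.max c ct + alpha rt r + beta rt r * Size m Rt
  end.

Definition entry_data (e : option (ctree p)) :=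
  if e is Some t then Some (root t, supp t, cost t) else None.

Lemma cost_NodeE r es : cost (Node r es) = foldl (cost_step r) 0 (map entry_data es).
Proof. by []. Qed.

Lemma cost_step_le r e c c' : c <= c' -> cost_step r c e <= cost_step r c' e.
Proof.
by case: e => [[[rt Rt] ct]|] /= le_cc'; rewrite !lerD2r //; apply: le_max2.
Qed.

Lemma foldl_cost_step_le r l c c' :
  c <= c' -> foldl (cost_step r) c l <= foldl (cost_step r) c' l.
Proof. by elim: l c c' => [|e l IH] //= c c' /(cost_step_le r e); apply: IH. Qed.

Lemma foldl_cost_step_addr r l (c g : K) :
  0 <= g -> foldl (cost_step r) (c + g) l <= foldl (cost_step r) c l + g.
Proof.
move=> g_ge0; elim: l c => [|e l IH] c //=.
apply: le_trans (IH _); apply: foldl_cost_step_le.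
case: e => [[[rt Rt] ct]|] /=; last by rewrite addrAC.
by rewrite (addrAC _ _ g) (addrAC _ _ g) !lerD2r addr_maxl; apply: le_max2; rewrite // lerDl.
Qed.

Lemma cost_Node_rcons r es t :
  cost (Node r (rcons es (Some t))) =
  Num.max (cost (Node r es)) (cost t) + alpha (root t) r + beta (root t) r * Size m (supp t).
Proof. by rewrite cost_NodeE map_rcons foldl_rcons. Qed.

Lemma cost_copy_first r es :
  0 <= gamma r * m r -> cost (Node r (None :: es)) <= cost (Node r (rcons es None)).
Proof.
rewrite !cost_NodeE map_rcons foldl_rcons /= add0r -[X in foldl _ X _]add0r.
exact: foldl_cost_step_addr.
Qed.

Lemma cost_entries R r t :
  is_ctree R r t -> cost (Node r (entries t)) = if R == [set r] then gamma r * m r else cost t.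
Proof.
case: t => [r0|r0 es] /and3P [wf_t /eqP <- /eqP /= r0r]; subst r0.
  by rewrite eqxx /= add0r.
by rewrite (negPf (wf_Node_supp_neq1 wf_t)).
Qed.

Definition join_cost r r' R Rb (c1 c2 : K) : K :=
  (if R == [set r] then Num.max (gamma r * m r) c2 else Num.max c1 c2)
  + alpha r' r + beta r' r * Size m Rb.

Lemma join_cost_le r r' R Rb c1 c2 c1' c2' :
  c1 <= c1' -> c2 <= c2' -> join_cost r r' R Rb c1 c2 <= join_cost r r' R Rb c1' c2'.
Proof. by move=> le_c1 le_c2; rewrite /join_cost !lerD2r; case: ifP => _; apply: le_max2. Qed.

Lemma cost_graft R Rb r r' t1 t2 :
  is_ctree R r t1 -> is_ctree Rb r' t2 ->
  cost (graft t1 t2) = join_cost r r' R Rb (cost t1) (cost t2).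
Proof.
move=> t1_R; case/and3P: (t1_R) => _ _ /eqP t1_r /and3P [_ /eqP <- /eqP <-].
by rewrite /graft t1_r cost_Node_rcons (cost_entries t1_R) /join_cost; case: ifP.
Qed.

End Cost.

Section Proposition2.
Variables (K : realFieldType) (p : nat).
Variables (m gamma : 'I_p -> K) (alpha beta : 'I_p -> 'I_p -> K).
Hypothesis gamma_m_ge0 : forall i, 0 <= gamma i * m i.
Implicit Types (P R : {set 'I_p}) (r : 'I_p) (t : ctree p).
Local Notation cost := (cost m gamma alpha beta).
Local Notation join_cost := (join_cost m gamma alpha beta).

Definition tree_costs P r : K -> Prop :=
  fun x => exists t, is_ctree P r t /\ x = cost t.

Definition split_costs P r : K -> Prop :=
  fun x => exists R Rb r' t1 t2,
    [/\ R :|: Rb = P, [disjoint R & Rb], r \in R & r' \in Rb] /\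
    [/\ is_ctree R r t1, is_ctree Rb r' t2 & x = join_cost r r' R Rb (cost t1) (cost t2)].

Lemma split_costs_tree P r x : split_costs P r x -> tree_costs P r x.
Proof.
case=> R [Rb [r' [t1 [t2 [[<- disj _ _] [t1_R t2_Rb ->]]]]]].
by exists (graft t1 t2); rewrite (is_ctree_graft t1_R t2_Rb disj) (cost_graft _ _ _ _ t1_R t2_Rb).
Qed.

Lemma ctree_last_subtree P r t :
  (2 <= #|P|)%N -> is_ctree P r t ->
  exists es t', is_ctree P r (Node r (rcons es (Some t'))) /\
                cost (Node r (rcons es (Some t'))) <= cost t.
Proof.
move=> P_ge2; case: t => [r0|r0 es] t_P; case/and3P: (t_P) => wf_t /eqP supp_t /eqP /= r0r.
  by move: P_ge2; rewrite -supp_t r0r cards1.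
subst r0; case/lastP: es t_P wf_t {supp_t} => [|es [t'|]] t_P wf_t //; first by exists es, t'.
case/lastP: es t_P wf_t => [|es [t'|]] t_P wf_t //; last first.
  by move: wf_t => /and5P []; rewrite -!cats1 !count_cat /= !addn1.
exists (None :: es), t'; rewrite rcons_cons is_ctree_copy_first.
by split=> //; apply: cost_copy_first.
Qed.

Lemma tree_costs_split P r x :
  (2 <= #|P|)%N -> tree_costs P r x -> exists2 y, split_costs P r y & y <= x.
Proof.
move=> P_ge2 [t [t_P ->]].
have [es [t' [/and3P [wf_t' /eqP supp_t' _] le_cost]]] := ctree_last_subtree P_ge2 t_P.
exists (cost (Node r (rcons es (Some t')))) => //.
have [t1_R t2_Rb disj] := is_ctree_ungraft wf_t'.
exists (supp (node r es)), (supp t'), (root t'), (node r es), t'; split.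
  split=> //; last exact: root_supp.
    by rewrite -supp_graft graft_node.
  by rewrite -{1}(root_node r es) root_supp.
by split=> //; rewrite -(cost_graft _ _ _ _ t1_R t2_Rb) graft_node.
Qed.

Lemma is_min_tree_costsE P r x :
  (2 <= #|P|)%N -> is_min (tree_costs P r) x <-> is_min (split_costs P r) x.
Proof.
move=> P_ge2; apply: is_min_dominated; first exact: split_costs_tree.
by move=> y; apply: tree_costs_split.
Qed.

Definition split_pair P r :=
  [pred q : {set 'I_p} * 'I_p | [&& q.1 \subset P, r \in q.1, q.2 \in P & q.2 \notin q.1]].

Lemma split_costsE P r y :
  split_costs P r y <->
  exists2 q, q \in enum (split_pair P r) &
    image2 (join_cost r q.2 q.1 (P :\: q.1)) (tree_costs q.1 r) (tree_costs (P :\: q.1) q.2) y.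
Proof.
rewrite /image2; split.
  case=> R [Rb [r' [t1 [t2 [[<- disj rR r'Rb] [t1_R t2_Rb ->]]]]]].
  have RbE : (R :|: Rb) :\: R = Rb.
    by rewrite setDUl setDv set0U; apply/setDidPl; rewrite disjoint_sym.
  exists (R, r'); rewrite /= ?RbE.
    by rewrite mem_enum inE /= subsetUl rR inE r'Rb orbT (disjointFl disj r'Rb).
  by exists (cost t1), (cost t2); split; [exists t1 | exists t2 |].
case=> [[R r']]; rewrite mem_enum inE => /and4P [/= RP rR r'P r'R].
case=> _ [_ [[t1 [t1_R ->]] [t2 [t2_Rb ->]] ->]].
exists R, (P :\: R), r', t1, t2; split; split=> //.
- exact: setUD_subset.
- exact: disjoint_setD.
- by rewrite inE r'R.
Qed.

Lemma exists_min_tree_costs n P r :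
  (#|P| <= n)%N -> r \in P -> exists x, is_min (tree_costs P r) x.
Proof.
elim: n P r => [|n IH] P r P_le rP.
  by move: P_le; rewrite leqn0 cards_eq0 => /eqP P0; rewrite P0 inE in rP.
have [P_le1 | P_ge2] := leqP #|P| 1.
  have -> : P = [set r] by apply/eqP; rewrite eq_sym eqEcard sub1set rP cards1.
  exists 0; split; first by exists (Leaf r); rewrite /is_ctree /= !eqxx.
  by move=> y [t [/ctree_set1 -> ->]].
suff [x x_min] : exists x, is_min (split_costs P r) x.
  by exists x; apply/is_min_tree_costsE.
have IH_split q : q \in enum (split_pair P r) ->
    exists x, is_min (image2 (join_cost r q.2 q.1 (P :\: q.1))
                       (tree_costs q.1 r) (tree_costs (P :\: q.1) q.2)) x.
  case: q => [R r']; rewrite mem_enum inE => /and4P [/= RP rR r'P r'R].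
  have [x1 x1_min] := IH R r (leq_trans (subset_card_lt RP r'P r'R) P_le) rR.
  have rPR : r \notin P :\: R by rewrite inE rR.
  have r'PR : r' \in P :\: R by rewrite inE r'R.
  have [x2 x2_min] := IH _ _ (leq_trans (subset_card_lt (subsetDl P R) rP rPR) P_le) r'PR.
  exists (join_cost r r' R (P :\: R) x1 x2).
  by apply: is_min_image2 x1_min x2_min => *; apply: join_cost_le.
have [r' r'P] : exists r', r' \in P :\ r.
  by apply/card_gt0P; move: P_ge2; rewrite (cardsD1 r P) rP.
have r'_pair : ([set r], r') \in enum (split_pair P r).
  by move: r'P; rewrite mem_enum !inE sub1set rP eqxx => /andP [-> ->].
have pairs_nz : enum (split_pair P r) != [::] by apply: contraTneq r'_pair => ->.
have [x x_min] := exists_min_union pairs_nz IH_split.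
exists x; apply: is_min_eq x_min => y; exact: iff_sym (split_costsE P r y).
Qed.

End Proposition2.

Theorem proposition2 (K : realFieldType) (p : nat)
  (m gamma : 'I_p -> K) (alpha beta : 'I_p -> 'I_p -> K)
  (hm : forall i, 0 <= m i) (hgamma : forall i, 0 <= gamma i)
  (halpha : forall i j, i != j -> 0 <= alpha i j)
  (hbeta : forall i j, i != j -> 0 <= beta i j)
  (P : {set 'I_p}) (r : 'I_p) (hP : (2 <= #|P|)%N) (hr : r \in P) :
  let treeCosts := fun x : K =>
    exists T : ctree p, is_ctree P r T /\ x = cost m gamma alpha beta T in
  let splitCosts := fun x : K =>
    exists (R Rb : {set 'I_p}) (r' : 'I_p) (T1 T2 : ctree p),
      [/\ R :|: Rb = P, [disjoint R & Rb], r \in R & r' \in Rb] /\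
      [/\ is_ctree R r T1, is_ctree Rb r' T2 &
          x = (if R == [set r]
               then Num.max (gamma r * m r) (cost m gamma alpha beta T2)
               else Num.max (cost m gamma alpha beta T1) (cost m gamma alpha beta T2))
              + alpha r' r + beta r' r * Size m Rb] in
  (exists x, is_min treeCosts x) /\
  (forall x, is_min treeCosts x <-> is_min splitCosts x).
Proof.
have gamma_m_ge0 i : 0 <= gamma i * m i by rewrite mulr_ge0.
move=> treeCosts splitCosts; split.
  exact (exists_min_tree_costs alpha beta gamma_m_ge0 (leqnn #|P|) hr).
exact: (fun x => is_min_tree_costsE alpha beta gamma_m_ge0 r x hP).
Qed.
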